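(* Let $q$ be a self-join-free Boolean conjunctive query and let $\mathbf{db}$ be a database. Let $A,B\in\mathbf{db}$. (1) If $A\hookrightarrow B$, then $A\hookrightarrow B'$ for every fact $B'\in\mathbf{db}$ key-equal to $B$. (2) If $A\hookrightarrow B$, $A\hookrightarrow B'$ and $\mathrm{atom}(B)=\mathrm{atom}(B')$, then $B$ and $B'$ are key-equal.
   Context: Every relation name has a signature $[n,k]$ ($1\le k\le n$; primary-key positions $1,\dots,k$) and a mode in $\{\mathsf{c},\mathsf{i}\}$. For an atom $F$, $\mathrm{key}(F)$ = variables at primary-key positions, $\mathrm{vars}(F)$ = all its variables. Facts are variable-free atoms; facts are key-equal if same relation name and same primary-key values. A database is a finite set of facts with no two distinct key-equal facts of mode $\mathsf{c}$; all relation names of facts in $\mathbf{db}$ occur in $q$. A self-join-free Boolean conjunctive query is a finite set of atoms with distinct relation names. For a fact $A$, $\mathrm{atom}(A)$ is the atom of $q$ with the same relation name. $\mathcal{K}(p)=\{\mathrm{key}(F)\to\mathrm{vars}(F)\mid F\in p\}$ (FDs over variables), $q^{\mathsf{c}}$ = atoms of $q$ of mode $\mathsf{c}$. The M-graph of $q$: vertices atoms of $q$, edge $F\to G$ ($F\ne G$) iff $\mathcal{K}(q^{\mathsf{c}})\models\mathrm{vars}(F)\to\mathrm{key}(G)$. The $\hookrightarrow$-graph of $\mathbf{db}$ has the facts of $\mathbf{db}$ as vertices and an edge $A\hookrightarrow B$ iff there are a valuation $\theta$ of the variables of $q$ and an M-graph edge $F\to G$ with $\theta(q)\subseteq\mathbf{db}$,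 $A=\theta(F)$ and $B$ key-equal to $\theta(G)$. *)

From Stdlib Require Import List.
Import ListNotations.
Set Implicit Arguments.

Inductive mode := ModeC | ModeI.

Record schema (Rel : Type) := Schema {
  arity : Rel -> nat;
  keylen : Rel -> nat;
  rmode : Rel -> mode
}.

Definition schema_wf (Rel : Type) (S : schema Rel) : Prop :=
  forall R, 1 <= keylen S R /\ keylen S R <= arity S R.

Section Defs.
Variables (Rel V C : Type) (S : schema Rel).

Inductive term := TVar (x : V) | TConst (c : C).

Record atom := Atom { rel : Rel; args : list term }.

Record fact := Fact { frel : Rel; fargs : list C }.

Definition atom_wf (F : atom) : Prop := length (args F) = arity S (rel F).
Definition fact_wf (A : fact) : Prop := length (fargs A) = arity S (frel A).

Definition vars (F : atom) : V -> Prop := fun x => In (TVar x) (args F).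
Definition key (F : atom) : V -> Prop :=
  fun x => In (TVar x) (firstn (keylen S (rel F)) (args F)).

Definition key_equal (A B : fact) : Prop :=
  frel A = frel B /\
  firstn (keylen S (frel A)) (fargs A) = firstn (keylen S (frel B)) (fargs B).

Definition sjf_query (q : list atom) : Prop :=
  NoDup (map rel q) /\ forall F, In F q -> atom_wf F.

Definition database (q : list atom) (db : list fact) : Prop :=
  (forall A, In A db -> fact_wf A) /\
  (forall A B, In A db -> In B db -> rmode S (frel A) = ModeC ->
       key_equal A B -> A = B) /\
  (forall A, In A db -> exists F, In F q /\ rel F = frel A).

Definition atom_of (q : list atom) (A : fact) (F : atom) : Prop :=
  In F q /\ rel F = frel A.

Definition apply_term (theta : V -> C) (t : term) : C :=
  match t with TVar x => theta x | TConst c => c end.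
Definition apply_atom (theta : V -> C) (F : atom) : fact :=
  Fact (rel F) (map (apply_term theta) (args F)).
Definition embeds (theta : V -> C) (q : list atom) (db : list fact) : Prop :=
  forall F, In F q -> In (apply_atom theta F) db.

(* Functional dependencies X -> Y over variables; K(p) is the set
   {key(F) -> vars(F) | F in p}, p given as a predicate on atoms. *)
Definition fd_sat (D : Type) (T : list (V -> D)) (X Y : V -> Prop) : Prop :=
  forall t1 t2, In t1 T -> In t2 T ->
    (forall x, X x -> t1 x = t2 x) -> forall y, Y y -> t1 y = t2 y.

Definition K_entails (p : atom -> Prop) (X Y : V -> Prop) : Prop :=
  forall (D : Type) (T : list (V -> D)),
    (forall F, p F -> fd_sat T (key F) (vars F)) -> fd_sat T X Y.

Definition qc (q : list atom) : atom -> Prop :=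
  fun F => In F q /\ rmode S (rel F) = ModeC.

Definition mgraph_edge (q : list atom) (F G : atom) : Prop :=
  In F q /\ In G q /\ F <> G /\ K_entails (qc q) (vars F) (key G).

Definition hook (q : list atom) (db : list fact) (A B : fact) : Prop :=
  In A db /\ In B db /\
  exists (theta : V -> C) (F G : atom),
    mgraph_edge q F G /\ embeds theta q db /\
    A = apply_atom theta F /\ key_equal B (apply_atom theta G).

End Defs.

(* Part (1) holds because the target of a hook edge is only constrained up to
   key-equality.  For part (2), write A = θ1(F) = θ2(F) with M-graph edges
   F -> G and B ~ θ1(G), B' ~ θ2(G) (self-join-freeness makes the atoms F and G
   shared).  The two valuations agree on vars(F), and as a two-row relation
   they satisfy K(q^c), because both embed q into db and db never contains two
   distinct key-equal facts of mode c.  Hence they satisfy vars(F) -> key(G),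
   so θ1(G) and θ2(G) are key-equal. *)
From Stdlib Require Import List.
Import ListNotations.

Lemma NoDup_map_inj {X Y : Type} {f : X -> Y} {l : list X} {x y : X} :
  NoDup (map f l) -> In x l -> In y l -> f x = f y -> x = y.
Proof.
  induction l as [|a l IH]; simpl; intros Hnd Hx Hy Hfxy; [contradiction|].
  inversion Hnd as [|? ? Hfa Hnd']; subst.
  destruct Hx as [<-|Hx], Hy as [<-|Hy]; auto.
  - exfalso; apply Hfa; rewrite Hfxy; apply in_map; exact Hy.
  - exfalso; apply Hfa; rewrite <- Hfxy; apply in_map; exact Hx.
Qed.

Lemma fd_sat_pair {V D : Type} (t1 t2 : V -> D) (X Y : V -> Prop) :
  fd_sat [t1; t2] X Y <->
  ((forall x, X x -> t1 x = t2 x) -> forall y, Y y -> t1 y = t2 y).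
Proof.
  split.
  - intros Hsat; apply Hsat; simpl; auto.
  - intros Himp u1 u2 Hu1 Hu2 Hagree y Hy.
    destruct Hu1 as [<-|[<-|[]]], Hu2 as [<-|[<-|[]]]; auto.
    symmetry; apply Himp; auto.
    intros x Hx; symmetry; auto.
Qed.

Section Hook.
Context {Rel V C : Type} {S : schema Rel}.

Lemma key_equal_sym {A B : fact Rel C} : key_equal S A B -> key_equal S B A.
Proof. intros [Hrel Hkey]; split; auto. Qed.

Lemma key_equal_trans {A B D : fact Rel C} :
  key_equal S A B -> key_equal S B D -> key_equal S A D.
Proof. intros [HAB KAB] [HBD KBD]; split; congruence. Qed.

Lemma sjf_query_rel_inj {q : list (atom Rel V C)} {F G : atom Rel V C} :
  sjf_query S q -> In F q -> In G q -> rel F = rel G -> F = G.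
Proof. intros [Hnd _]; exact (NoDup_map_inj Hnd). Qed.

Lemma apply_atom_eq_iff (t1 t2 : V -> C) (F : atom Rel V C) :
  apply_atom t1 F = apply_atom t2 F <-> (forall x, vars F x -> t1 x = t2 x).
Proof.
  unfold apply_atom, vars; split.
  - intros E x Hx; injection E as E.
    exact (ext_in_map E (TVar C x) Hx).
  - intros Hagree; f_equal; apply map_ext_in.
    intros [x|c] Ht; simpl; auto.
Qed.

Lemma key_equal_apply_atom {t1 t2 : V -> C} {F : atom Rel V C} :
  (forall x, key S F x -> t1 x = t2 x) ->
  key_equal S (apply_atom t1 F) (apply_atom t2 F).
Proof.
  intros Hagree; split; [reflexivity|]; simpl.
  rewrite !firstn_map; apply map_ext_in.
  intros [x|c] Ht; simpl; auto.
Qed.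

Lemma embeds_pair_sat_qc {q : list (atom Rel V C)} {db : list (fact Rel C)}
    {t1 t2 : V -> C} {H : atom Rel V C} :
  database S q db -> embeds t1 q db -> embeds t2 q db -> qc S q H ->
  fd_sat [t1; t2] (key S H) (vars H).
Proof.
  intros [_ [Hconsistent _]] Hem1 Hem2 [HH Hmode].
  apply fd_sat_pair; intros Hkey.
  apply apply_atom_eq_iff, Hconsistent; auto.
  apply key_equal_apply_atom, Hkey.
Qed.

Lemma hook_key_equal_r {q : list (atom Rel V C)} {db : list (fact Rel C)}
    {A B B' : fact Rel C} :
  In B' db -> key_equal S B B' -> hook S q db A B -> hook S q db A B'.
Proof.
  intros HB' Hke [HA [_ [t [F [G [Hedge [Hem [HAt HBt]]]]]]]].
  split; [exact HA|split; [exact HB'|]].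
  exists t, F, G; split; [exact Hedge|split; [exact Hem|split; [exact HAt|]]].
  exact (key_equal_trans (key_equal_sym Hke) HBt).
Qed.

Lemma hook_targets_key_equal {q : list (atom Rel V C)} {db : list (fact Rel C)}
    {A B B' : fact Rel C} {H : atom Rel V C} :
  sjf_query S q -> database S q db ->
  hook S q db A B -> hook S q db A B' ->
  atom_of q B H -> atom_of q B' H -> key_equal S B B'.
Proof.
  intros Hq Hdb [_ [_ [t1 [F1 [G1 [[HF1 [HG1 [_ Hent]]] [Hem1 [HA1 HB1]]]]]]]]
    [_ [_ [t2 [F2 [G2 [[HF2 [HG2 _]] [Hem2 [HA2 HB2]]]]]]]] [_ HrelB] [_ HrelB'].
  assert (EF : F1 = F2).
  { apply (sjf_query_rel_inj Hq HF1 HF2).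
    exact (f_equal (@frel Rel C) (eq_trans (eq_sym HA1) HA2)). }
  subst F2.
  assert (EG : G1 = G2).
  { apply (sjf_query_rel_inj Hq HG1 HG2).
    destruct HB1 as [HrelB1 _], HB2 as [HrelB2 _]; simpl in *; congruence. }
  subst G2.
  assert (Hvars : forall x, vars F1 x -> t1 x = t2 x)
    by (apply apply_atom_eq_iff; congruence).
  assert (Hkey : forall y, key S G1 y -> t1 y = t2 y).
  { apply (proj1 (fd_sat_pair t1 t2 (vars F1) (key S G1))); [|exact Hvars].
    apply Hent; intros H' HH'.
    exact (embeds_pair_sat_qc Hdb Hem1 Hem2 HH'). }
  apply (key_equal_trans HB1), (fun E => key_equal_trans E (key_equal_sym HB2)).
  exact (key_equal_apply_atom Hkey).
Qed.

End Hook.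

Theorem lemma13 (Rel V C : Type) (S : schema Rel) (q : list (atom Rel V C))
  (db : list (fact Rel C)) (A B : fact Rel C) :
  schema_wf S -> sjf_query S q -> database S q db ->
  In A db -> In B db ->
  (forall B' : fact Rel C, In B' db -> key_equal S B B' ->
     hook S q db A B -> hook S q db A B') /\
  (forall B' : fact Rel C, In B' db ->
     hook S q db A B -> hook S q db A B' ->
     (exists F, atom_of q B F /\ atom_of q B' F) ->
     key_equal S B B').
Proof.
  intros _ Hq Hdb _ _; split.
  - intros B' HB' Hke; exact (hook_key_equal_r HB' Hke).
  - intros B' _ HAB HAB' [H [HB HB']].
    exact (hook_targets_key_equal Hq Hdb HAB HAB' HB HB').
Qed.
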